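(* For $\omega\in\mathbb{T}$ and $\upsilon\in\operatorname{Aut}\mathbb{D}$, written $\upsilon(\lambda)=\eta\frac{\lambda-\alpha}{1-\bar\alpha\lambda}$ with $\eta\in\mathbb{T}$, $\alpha\in\mathbb{D}$, define $$f_{\omega\upsilon}(a,s,p)=\left(\frac{\omega\eta(1-|\alpha|^2)a}{1-\bar\alpha s+\bar\alpha^2p},\ \tau_\upsilon(s,p)\right),$$ where $\tau_\upsilon(\lambda_1+\lambda_2,\lambda_1\lambda_2)=(\upsilon(\lambda_1)+\upsilon(\lambda_2),\upsilon(\lambda_1)\upsilon(\lambda_2))$ for $\lambda_1,\lambda_2\in\mathbb{D}$; explicitly $$f_{\omega\upsilon}(a,s,p)=\frac{\eta}{1-\bar\alpha s+\bar\alpha^2p}\Big(\omega(1-|\alpha|^2)a,\ -2\alpha+(1+|\alpha|^2)s-2\bar\alpha p,\ \eta(\alpha^2-\alpha s+p)\Big).$$ Then each $f_{\omega\upsilon}$ is an automorphism of $\mathcal{P}$ (a bijective holomorphic self-map with holomorphic inverse) which extends analytically to a neighbourhood of $\overline{\mathcal{P}}$; for all $\omega_1,\omega_2\in\mathbb{T}$ and $\upsilon_1,\upsilon_2\in\operatorname{Aut}\mathbb{D}$, $f_{\omega_1\upsilon_1}\circ f_{\omega_2\upsilon_2}=f_{(\omega_1\omega_2)(\upsilon_1\circ\upsilon_2)}$, and $(f_{\omega\upsilon})^{-1}=f_{\bar\omega\upsilon^{-1}}$. Consequently $\{f_{\omega\upsilon}:\omega\in\mathbb{T},\upsilon\in\operatorname{Aut}\mathbb{D}\}$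 is a group of automorphisms of $\mathcal{P}$ under composition.
   Context: $\mathbb{D}$ is the open unit disc, $\mathbb{T}$ the unit circle, $\operatorname{Aut}\mathbb{D}$ the group of Möbius automorphisms of $\mathbb{D}$. $\mathbb{B}$ is the open unit ball of $\mathbb{C}^{2\times 2}$ (operator norm), $\pi(A)=(a_{21},\operatorname{tr}A,\det A)$, $\mathcal{P}=\pi(\mathbb{B})$, $\overline{\mathcal{P}}$ its closure. Every $(s,p)$ with $(a,s,p)\in\mathcal{P}$ is of the form $(\lambda_1+\lambda_2,\lambda_1\lambda_2)$ with $\lambda_1,\lambda_2\in\mathbb{D}$. *)

From Stdlib Require Import Reals Lra.
Open Scope R_scope.

Record Cplx := mkC { Re : R; Im : R }.

Definition RtoC (r : R) : Cplx := mkC r 0.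
Definition C0 : Cplx := RtoC 0.
Definition C1 : Cplx := RtoC 1.
Definition Cadd (z w : Cplx) : Cplx := mkC (Re z + Re w) (Im z + Im w).
Definition Copp (z : Cplx) : Cplx := mkC (- Re z) (- Im z).
Definition Csub (z w : Cplx) : Cplx := Cadd z (Copp w).
Definition Cmul (z w : Cplx) : Cplx :=
  mkC (Re z * Re w - Im z * Im w) (Re z * Im w + Im z * Re w).
Definition Cconj (z : Cplx) : Cplx := mkC (Re z) (- Im z).
Definition Cnorm2 (z : Cplx) : R := Re z * Re z + Im z * Im z.
(* multiplicative inverse (total; 1/0 is some unspecified value of R) *)
Definition Cinv (z : Cplx) : Cplx :=
  mkC (Re z / Cnorm2 z) (- Im z / Cnorm2 z).
Definition Cdiv (z w : Cplx) : Cplx := Cmul z (Cinv w).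

Declare Scope Cplx_scope.
Delimit Scope Cplx_scope with Cx.
Infix "+" := Cadd : Cplx_scope.
Infix "-" := Csub : Cplx_scope.
Infix "*" := Cmul : Cplx_scope.
Infix "/" := Cdiv : Cplx_scope.
Notation "- z" := (Copp z) : Cplx_scope.

Definition inD (z : Cplx) : Prop := Cnorm2 z < 1.
Definition inT (z : Cplx) : Prop := Cnorm2 z = 1.

Definition mob (eta alpha lam : Cplx) : Cplx :=
  (eta * (lam - alpha) / (C1 - Cconj alpha * lam))%Cx.

Definition C3 : Type := (Cplx * Cplx * Cplx)%type.
Definition C3add (z w : C3) : C3 :=
  let '(a, s, p) := z in let '(a', s', p') := w in
  ((a + a')%Cx, (s + s')%Cx, (p + p')%Cx).
Definition C3sub (z w : C3) : C3 :=
  let '(a, s, p) := z in let '(a', s', p') := w in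
  ((a - a')%Cx, (s - s')%Cx, (p - p')%Cx).
Definition C3scal (c : Cplx) (z : C3) : C3 :=
  let '(a, s, p) := z in ((c * a)%Cx, (c * s)%Cx, (c * p)%Cx).
Definition C3norm2 (z : C3) : R :=
  let '(a, s, p) := z in Cnorm2 a + Cnorm2 s + Cnorm2 p.
Definition C3dist2 (z w : C3) : R := C3norm2 (C3sub z w).

Record M2 := mkM2 { m11 : Cplx; m12 : Cplx; m21 : Cplx; m22 : Cplx }.

(* operator norm (w.r.t. the Euclidean norm on C^2) is < 1:
   there is r < 1 with |A x| <= r |x| for all x in C^2 *)
Definition inBall (A : M2) : Prop :=
  exists r : R, 0 <= r < 1 /\
    forall x1 x2 : Cplx,
      Cnorm2 (m11 A * x1 + m12 A * x2)%Cx + Cnorm2 (m21 A * x1 + m22 A * x2)%Cx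
      <= (r * r) * (Cnorm2 x1 + Cnorm2 x2).

Definition piM (A : M2) : C3 :=
  (m21 A, (m11 A + m22 A)%Cx, (m11 A * m22 A - m12 A * m21 A)%Cx).

Definition inP (z : C3) : Prop := exists A : M2, inBall A /\ piM A = z.

Definition inPbar (z : C3) : Prop :=
  forall eps : R, 0 < eps -> exists w : C3, inP w /\ C3dist2 z w < eps * eps.

Definition Clinear (L : C3 -> C3) : Prop :=
  (forall z w, L (C3add z w) = C3add (L z) (L w)) /\
  (forall c z, L (C3scal c z) = C3scal c (L z)).

Definition Cdifferentiable (F : C3 -> C3) (z : C3) : Prop :=
  exists L : C3 -> C3, Clinear L /\
    forall eps : R, 0 < eps -> exists delta : R, 0 < delta /\
      forall h : C3, 0 < C3norm2 h < delta * delta ->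
        C3norm2 (C3sub (C3sub (F (C3add z h)) (F z)) (L h))
          <= (eps * eps) * C3norm2 h.

Definition holo_on (U : C3 -> Prop) (F : C3 -> C3) : Prop :=
  forall z, U z -> Cdifferentiable F z.

Definition C3open (U : C3 -> Prop) : Prop :=
  forall z, U z -> exists eps : R, 0 < eps /\
    forall w, C3dist2 z w < eps * eps -> U w.

Definition autP (f : C3 -> C3) : Prop :=
  (forall z, inP z -> inP (f z)) /\ holo_on inP f /\
  exists g : C3 -> C3,
    (forall z, inP z -> inP (g z)) /\ holo_on inP g /\
    (forall z, inP z -> g (f z) = z) /\ (forall z, inP z -> f (g z) = z).

Definition extends_near_Pbar (f : C3 -> C3) : Prop :=
  exists (U : C3 -> Prop) (F : C3 -> C3),
    C3open U /\ (forall z, inPbar z -> U z) /\ holo_on U F /\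
    (forall z, inP z -> F z = f z).

Definition fmap (omega eta alpha : Cplx) (z : C3) : C3 :=
  let '(a, s, p) := z in
  let ab := Cconj alpha in
  let n2 := RtoC (Cnorm2 alpha) in
  let k := (eta / (C1 - ab * s + ab * ab * p))%Cx in
  ((k * (omega * (C1 - n2) * a))%Cx,
   (k * (- (RtoC 2 * alpha) + (C1 + n2) * s - RtoC 2 * ab * p))%Cx,
   (k * (eta * (alpha * alpha - alpha * s + p)))%Cx).

(* For [A] in the ball and [al] in the disc, the matrix [eta (A - al) (I - conj(al) A)^-1],
   conjugated by [diag(1, om)], is again in the ball: with [w = A y], the substitution
   [(y, w) |-> (y - conj(al) w, w - al y)] multiplies [|y|^2 - |w|^2] by [1 - |al|^2], so
   the image of [y - conj(al) w] stays uniformly shorter.  Its image under [pi] is [f (pi A)].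
   The denominator of [f] at [pi A] is [det (I - conj(al) A)], bounded below on [P] by
   [(1 - |al|^2)^4 / 16]; this gives holomorphy on a neighbourhood of the closure.
   Finally [f] is the action on [(a, s, p)] of the linear fractional map
   [lam |-> (eta lam - eta al) / (- conj(al) lam + 1)]; these actions compose like the
   coefficient matrices, up to a scalar, and a Moebius map of the disc determines its
   parameters [(eta, al)], which yields the composition and inverse laws. *)

From Pilot Require Import Defs.
From Stdlib Require Import Reals Lra Psatz Field.
(* Re-import so that [C0] and [C1] denote the complex constants, not those of [Reals]. *)
Import Pilot.Defs.
Open Scope R_scope.

(** * Complex arithmetic *)

Lemma Cplx_ext (z w : Cplx) : Re z = Re w -> Im z = Im w -> z = w.
Proof. destruct z, w; simpl; intros -> ->; reflexivity. Qed.

Ltac Cunfold := unfold Csub, Cadd, Copp, Cmul, C0, C1, RtoC, Cconj, Cdiv, Cinv, Cnorm2 in *.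

Lemma Cplx_ring : ring_theory C0 C1 Cadd Cmul Csub Copp (@eq Cplx).
Proof. constructor; intros; apply Cplx_ext; Cunfold; simpl; ring. Qed.

Lemma Cnorm2_ge0 (z : Cplx) : 0 <= Cnorm2 z.
Proof. destruct z; unfold Cnorm2; simpl; nra. Qed.

Lemma Cnorm2_eq0 (z : Cplx) : Cnorm2 z = 0 -> z = C0.
Proof.
  destruct z as [a b]; unfold Cnorm2; simpl; intros H.
  apply Cplx_ext; simpl; nra.
Qed.

Lemma Cnorm2_gt0 (z : Cplx) : z <> C0 -> 0 < Cnorm2 z.
Proof.
  intros Hz; destruct (Cnorm2_ge0 z) as [|H]; auto.
  now contradict Hz; apply Cnorm2_eq0.
Qed.

Lemma Cnorm2_gt0_neq0 (z : Cplx) : 0 < Cnorm2 z -> z <> C0.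
Proof. intros H ->; Cunfold; simpl in H; lra. Qed.

Lemma Cplx_field : field_theory C0 C1 Cadd Cmul Csub Copp Cdiv Cinv (@eq Cplx).
Proof.
  constructor.
  - exact Cplx_ring.
  - intros H; apply (f_equal Re) in H; Cunfold; simpl in H; lra.
  - reflexivity.
  - intros z Hz; apply Cnorm2_gt0 in Hz.
    apply Cplx_ext; destruct z; Cunfold; simpl in *; field; lra.
Qed.

Add Field Cplx_field_inst : Cplx_field.

Section ComplexFacts.
Local Open Scope Cplx_scope.

Lemma Cnorm2_mul (z w : Cplx) : Cnorm2 (z * w) = (Cnorm2 z * Cnorm2 w)%R.
Proof. destruct z, w; Cunfold; simpl; ring. Qed.

Lemma Cnorm2_conj (z : Cplx) : Cnorm2 (Cconj z) = Cnorm2 z.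
Proof. destruct z; Cunfold; simpl; ring. Qed.

Lemma Cnorm2_opp (z : Cplx) : Cnorm2 (- z) = Cnorm2 z.
Proof. destruct z; Cunfold; simpl; ring. Qed.

Lemma Cnorm2_C1 : Cnorm2 C1 = 1%R.
Proof. Cunfold; simpl; ring. Qed.

Lemma Cnorm2_div (z w : Cplx) : w <> C0 -> Cnorm2 (z / w) = (Cnorm2 z / Cnorm2 w)%R.
Proof.
  intros Hw; apply Cnorm2_gt0 in Hw.
  destruct z, w; Cunfold; simpl in *; field; lra.
Qed.

Lemma RtoC_Cnorm2 (z : Cplx) : RtoC (Cnorm2 z) = z * Cconj z.
Proof. destruct z; apply Cplx_ext; Cunfold; simpl; ring. Qed.

Lemma RtoC_2 : RtoC 2 = C1 + C1.
Proof. apply Cplx_ext; Cunfold; simpl; ring. Qed.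

Lemma Cconj_mul (z w : Cplx) : Cconj (z * w) = Cconj z * Cconj w.
Proof. destruct z, w; apply Cplx_ext; Cunfold; simpl; ring. Qed.

Lemma Cconj_add (z w : Cplx) : Cconj (z + w) = Cconj z + Cconj w.
Proof. destruct z, w; apply Cplx_ext; Cunfold; simpl; ring. Qed.

Lemma Cconj_opp (z : Cplx) : Cconj (- z) = - Cconj z.
Proof. destruct z; apply Cplx_ext; Cunfold; simpl; ring. Qed.

Lemma Cconj_inv (z : Cplx) : Cconj (Cinv z) = Cinv (Cconj z).
Proof.
  destruct z as [a b]; apply Cplx_ext; Cunfold; simpl;
    replace (- b * - b)%R with (b * b)%R by ring; unfold Rdiv; ring.
Qed.

Lemma Cconj_div (z w : Cplx) : Cconj (z / w) = Cconj z / Cconj w.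
Proof. unfold Cdiv; rewrite Cconj_mul, Cconj_inv; reflexivity. Qed.

Lemma Cconj_involutive (z : Cplx) : Cconj (Cconj z) = z.
Proof. destruct z; apply Cplx_ext; Cunfold; simpl; ring. Qed.

Lemma Cconj_C0 : Cconj C0 = C0.
Proof. apply Cplx_ext; Cunfold; simpl; ring. Qed.

Lemma Cconj_C1 : Cconj C1 = C1.
Proof. apply Cplx_ext; Cunfold; simpl; ring. Qed.

Lemma C1_neq0 : C1 <> C0.
Proof. apply Cnorm2_gt0_neq0; rewrite Cnorm2_C1; lra. Qed.

Lemma Cmul_neq0 (z w : Cplx) : z <> C0 -> w <> C0 -> z * w <> C0.
Proof.
  intros Hz Hw; apply Cnorm2_gt0_neq0; rewrite Cnorm2_mul.
  apply Rmult_lt_0_compat; apply Cnorm2_gt0; assumption.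
Qed.

Lemma Cadd_neq0 (z w : Cplx) : (Cnorm2 w < Cnorm2 z)%R -> z + w <> C0.
Proof.
  intros H E.
  assert (Hw : w = - z) by (transitivity ((z + w) - z); [ring | rewrite E; ring]).
  rewrite Hw, Cnorm2_opp in H; lra.
Qed.

Lemma Cnorm2_add_le (z w : Cplx) : (Cnorm2 (z + w)%Cx <= 2 * Cnorm2 z + 2 * Cnorm2 w)%R.
Proof.
  destruct z as [a b], w as [c d]; Cunfold; simpl.
  pose proof (pow2_ge_0 (a - c)); pose proof (pow2_ge_0 (b - d)); nra.
Qed.

Lemma Cnorm2_sub_le (z w : Cplx) : (Cnorm2 (z - w)%Cx <= 2 * Cnorm2 z + 2 * Cnorm2 w)%R.
Proof.
  destruct z as [a b], w as [c d]; Cunfold; simpl.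
  pose proof (pow2_ge_0 (a + c)); pose proof (pow2_ge_0 (b + d)); nra.
Qed.

Lemma Cnorm2_add3_le (x y z : Cplx) :
  (Cnorm2 (x + y + z)%Cx <= 3 * (Cnorm2 x + Cnorm2 y + Cnorm2 z))%R.
Proof.
  destruct x as [a b], y as [c d], z as [e f]; Cunfold; simpl.
  pose proof (pow2_ge_0 (a - c)); pose proof (pow2_ge_0 (b - d));
  pose proof (pow2_ge_0 (a - e)); pose proof (pow2_ge_0 (b - f));
  pose proof (pow2_ge_0 (c - e)); pose proof (pow2_ge_0 (d - f)); nra.
Qed.

End ComplexFacts.

Lemma inT_neq0 (w : Cplx) : inT w -> w <> C0.
Proof. unfold inT; intros H; apply Cnorm2_gt0_neq0; lra. Qed.

Lemma inT_conj_inv (w : Cplx) : inT w -> Cconj w = Cinv w.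
Proof. unfold inT; intros H; destruct w; apply Cplx_ext; Cunfold; simpl in *; rewrite H; field. Qed.

Lemma inT_C1 : inT C1.
Proof. exact Cnorm2_C1. Qed.

Lemma inT_conj (w : Cplx) : inT w -> inT (Cconj w).
Proof. unfold inT; rewrite Cnorm2_conj; auto. Qed.

Lemma inT_mul (u w : Cplx) : inT u -> inT w -> inT (u * w)%Cx.
Proof. unfold inT; rewrite Cnorm2_mul; intros -> ->; ring. Qed.

Lemma inT_conj_mul (w : Cplx) : inT w -> (Cconj w * w)%Cx = C1.
Proof.
  intros H; unfold inT in H.
  transitivity (RtoC (Cnorm2 w)); [rewrite RtoC_Cnorm2; ring | rewrite H; reflexivity].
Qed.

Lemma inD_C0 : inD C0.
Proof. unfold inD; Cunfold; simpl; lra. Qed.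

Lemma inD_opp (z : Cplx) : inD z -> inD (- z)%Cx.
Proof. unfold inD; rewrite Cnorm2_opp; auto. Qed.

Lemma inD_conj (z : Cplx) : inD z -> inD (Cconj z).
Proof. unfold inD; rewrite Cnorm2_conj; auto. Qed.

Lemma inD_mul (z w : Cplx) : inD z -> inD w -> inD (z * w)%Cx.
Proof.
  unfold inD; intros Hz Hw; rewrite Cnorm2_mul.
  pose proof (Cnorm2_ge0 z); pose proof (Cnorm2_ge0 w); nra.
Qed.

Lemma inD_mul_inT (u z : Cplx) : inT u -> inD z -> inD (u * z)%Cx.
Proof. unfold inT, inD; rewrite Cnorm2_mul; intros -> H; lra. Qed.

Lemma C1_sub_neq0 (z : Cplx) : inD z -> (C1 - z)%Cx <> C0.
Proof. intros H; apply Cadd_neq0; rewrite Cnorm2_opp, Cnorm2_C1; exact H. Qed.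

(** * The denominator of [f] on [P] *)

Definition fmap_den (al : Cplx) (z : C3) : Cplx :=
  let '(_, s, p) := z in (C1 - Cconj al * s + Cconj al * Cconj al * p)%Cx.

Lemma Cnorm2_sub_lower (y1 y2 v1 v2 : Cplx) (t : R) : 0 <= t < 1 ->
  Cnorm2 v1 + Cnorm2 v2 <= t * (Cnorm2 y1 + Cnorm2 y2) ->
  (1 - t)^2 / 4 * (Cnorm2 y1 + Cnorm2 y2) <= Cnorm2 (y1 - v1)%Cx + Cnorm2 (y2 - v2)%Cx.
Proof.
  intros Ht Hv.
  set (e := (1 + t) / 2).
  set (Y := Cnorm2 y1 + Cnorm2 y2) in *; set (V := Cnorm2 v1 + Cnorm2 v2) in *.
  set (L := Cnorm2 (y1 - v1)%Cx + Cnorm2 (y2 - v2)%Cx).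
  set (S := Cnorm2 (RtoC e * y1 - v1)%Cx + Cnorm2 (RtoC e * y2 - v2)%Cx).
  assert (HS : S = e * e * Y - e * (Y + V - L) + V).
  { unfold S, Y, V, L; destruct y1, y2, v1, v2; Cunfold; simpl; ring. }
  assert (S0 : 0 <= S) by (unfold S; pose proof (Cnorm2_ge0 (RtoC e * y1 - v1)%Cx);
    pose proof (Cnorm2_ge0 (RtoC e * y2 - v2)%Cx); lra).
  assert (L0 : 0 <= L) by (unfold L; pose proof (Cnorm2_ge0 (y1 - v1)%Cx);
    pose proof (Cnorm2_ge0 (y2 - v2)%Cx); lra).
  assert (V0 : 0 <= V) by (unfold V; pose proof (Cnorm2_ge0 v1); pose proof (Cnorm2_ge0 v2); lra).
  (* with [e = (1+t)/2]: [L - (1-t)^2/4 Y = (1-e) L + S + (1-e) (t Y - V)] *)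
  assert (HL : 0 <= (1 - e) * L) by (apply Rmult_le_pos; unfold e; lra).
  assert (HV : 0 <= (1 - e) * (t * Y - V)) by (apply Rmult_le_pos; unfold e; lra).
  unfold e in *; nra.
Qed.

(* Testing the hypothesis at [x = (conj b, -a)], with [a], [b] the Gram entries
   [|col1|^2] and [<col1, col2>], gives [c (|b|^2 + a^2) <= a |det|^2]. *)
Lemma Cdet_lower_bound (p q r s : Cplx) (c : R) : 0 < c ->
  (forall x1 x2 : Cplx, c * (Cnorm2 x1 + Cnorm2 x2) <=
     Cnorm2 (p * x1 + q * x2)%Cx + Cnorm2 (r * x1 + s * x2)%Cx) ->
  c * c <= Cnorm2 (p * s - q * r)%Cx.
Proof.
  intros Hc H.
  set (a := Cnorm2 p + Cnorm2 r); set (d := Cnorm2 q + Cnorm2 s).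
  set (b := (p * Cconj q + r * Cconj s)%Cx).
  set (G := Cnorm2 (p * s - q * r)%Cx).
  assert (Ha : c <= a).
  { pose proof (H C1 C0) as H1; unfold a; destruct p, q, r, s; Cunfold; simpl in *; lra. }
  assert (Hd : c <= d).
  { pose proof (H C0 C1) as H1; unfold d; destruct p, q, r, s; Cunfold; simpl in *; lra. }
  assert (Hb : Cnorm2 b = a * d - G).
  { unfold a, b, d, G; destruct p, q, r, s; Cunfold; simpl; ring. }
  assert (Hx : c * (Cnorm2 b + a * a) <= a * G).
  { pose proof (H (Cconj b) (- RtoC a)%Cx) as H1.
    revert H1; unfold a, b, G; destruct p, q, r, s; Cunfold; simpl.
    match goal with
    | |- ?A <= ?B -> ?C <= ?D => replace C with A by ring; replace D with B by ring
    end.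
    auto. }
  rewrite Hb in Hx.
  assert (c * a * (a + d) <= G * (a + c)) by nra.
  assert (c * (a + c) <= a * (a + d)) by nra.
  nra.
Qed.

Lemma fmap_den_lower_bound (al : Cplx) (A : M2) : inD al -> inBall A ->
  (1 - Cnorm2 al)^4 / 16 <= Cnorm2 (fmap_den al (piM A)).
Proof.
  intros Hal [r [Hr HA]]; unfold inD in Hal.
  pose proof (Cnorm2_ge0 al) as Hal0.
  set (t := Cnorm2 al) in *.
  assert (Hc : 0 < (1 - t)^2 / 4) by (apply Rdiv_lt_0_compat; [apply pow_lt|]; lra).
  replace ((1 - t)^4 / 16) with ((1 - t)^2 / 4 * ((1 - t)^2 / 4)) by field.
  (* [fmap_den al (pi A) = det (I - conj(al) A)] *)
  replace (fmap_den al (piM A)) with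
    ((C1 - Cconj al * m11 A) * (C1 - Cconj al * m22 A)
     - (- (Cconj al * m12 A)) * (- (Cconj al * m21 A)))%Cx
    by (unfold fmap_den, piM; ring).
  apply Cdet_lower_bound; [exact Hc|]; intros x1 x2.
  set (w1 := (m11 A * x1 + m12 A * x2)%Cx); set (w2 := (m21 A * x1 + m22 A * x2)%Cx).
  replace ((C1 - Cconj al * m11 A) * x1 + - (Cconj al * m12 A) * x2)%Cx
    with (x1 - Cconj al * w1)%Cx by (unfold w1; ring).
  replace (- (Cconj al * m21 A) * x1 + (C1 - Cconj al * m22 A) * x2)%Cx
    with (x2 - Cconj al * w2)%Cx by (unfold w2; ring).
  apply Cnorm2_sub_lower; [lra|].
  rewrite !Cnorm2_mul, !Cnorm2_conj; fold t.
  specialize (HA x1 x2); fold w1 w2 in HA.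
  pose proof (Cnorm2_ge0 x1); pose proof (Cnorm2_ge0 x2).
  assert (Hw : Cnorm2 w1 + Cnorm2 w2 <= Cnorm2 x1 + Cnorm2 x2).
  { assert (r * r * (Cnorm2 x1 + Cnorm2 x2) <= 1 * (Cnorm2 x1 + Cnorm2 x2))
      by (apply Rmult_le_compat_r; nra).
    lra. }
  rewrite <- Rmult_plus_distr_l; apply Rmult_le_compat_l; lra.
Qed.

Lemma fmap_den_neq0 (al : Cplx) (z : C3) : inD al -> inP z -> fmap_den al z <> C0.
Proof.
  intros Hal [A [HA <-]]; apply Cnorm2_gt0_neq0.
  eapply Rlt_le_trans; [|apply fmap_den_lower_bound; assumption].
  unfold inD in Hal; apply Rdiv_lt_0_compat; [apply pow_lt|]; lra.
Qed.

(** * [f] maps [P] into itself *)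

(* [eta (A - al) (I - conj(al) A)^-1], conjugated by [diag(1, om)] to produce the factor [om]
   in the [(2,1)] entry; the inverse is the adjugate divided by [fmap_den al (piM A)]. *)
Definition fmap_matrix (om eta al : Cplx) (A : M2) : M2 :=
  let ab := Cconj al in
  let D := fmap_den al (piM A) in
  mkM2 (eta * ((m11 A - al) * (C1 - ab * m22 A) + m12 A * (ab * m21 A)) / D)%Cx
       (Cconj om * (eta * ((m11 A - al) * (ab * m12 A) + m12 A * (C1 - ab * m11 A)) / D))%Cx
       (om * (eta * (m21 A * (C1 - ab * m22 A) + (m22 A - al) * (ab * m21 A)) / D))%Cx
       (eta * (m21 A * (ab * m12 A) + (m22 A - al) * (C1 - ab * m11 A)) / D)%Cx.

Lemma piM_fmap_matrix (om eta al : Cplx) (A : M2) : inT om -> fmap_den al (piM A) <> C0 ->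
  piM (fmap_matrix om eta al A) = fmap om eta al (piM A).
Proof.
  intros Hom HD; destruct A as [a11 a12 a21 a22].
  unfold fmap_matrix, piM, fmap in *; simpl in *.
  rewrite RtoC_Cnorm2, RtoC_2, (inT_conj_inv om Hom).
  pose proof (inT_neq0 om Hom).
  f_equal; [f_equal|]; field; auto.
Qed.

Lemma mob_pair_contraction (al y1 y2 w1 w2 : Cplx) (r : R) : inD al -> 0 <= r < 1 ->
  Cnorm2 w1 + Cnorm2 w2 <= r * r * (Cnorm2 y1 + Cnorm2 y2) ->
  Cnorm2 (w1 - al * y1)%Cx + Cnorm2 (w2 - al * y2)%Cx
  <= (1 - (1 - Cnorm2 al) * (1 - r * r) / 4)
     * (Cnorm2 (y1 - Cconj al * w1)%Cx + Cnorm2 (y2 - Cconj al * w2)%Cx).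
Proof.
  intros Hal Hr Hw; unfold inD in Hal; pose proof (Cnorm2_ge0 al).
  set (t := Cnorm2 al) in *.
  set (Y := Cnorm2 y1 + Cnorm2 y2) in *; set (W := Cnorm2 w1 + Cnorm2 w2) in *.
  set (X := Cnorm2 (y1 - Cconj al * w1)%Cx + Cnorm2 (y2 - Cconj al * w2)%Cx).
  assert (Hid : forall y w, (Cnorm2 (y - Cconj al * w)%Cx - Cnorm2 (w - al * y)%Cx
                             = (1 - t) * (Cnorm2 y - Cnorm2 w))%R).
  { intros y w; unfold t; destruct y, w, al; Cunfold; simpl; ring. }
  assert (HXY : X <= 4 * Y).
  { pose proof (Cnorm2_sub_le y1 (Cconj al * w1)%Cx) as N1.
    pose proof (Cnorm2_sub_le y2 (Cconj al * w2)%Cx) as N2.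
    rewrite Cnorm2_mul, Cnorm2_conj in N1, N2; fold t in N1, N2.
    pose proof (Cnorm2_ge0 w1); pose proof (Cnorm2_ge0 w2).
    pose proof (Cnorm2_ge0 y1); pose proof (Cnorm2_ge0 y2).
    assert (HWY : W <= Y).
    { assert (r * r * Y <= 1 * Y) by (apply Rmult_le_compat_r; [unfold Y; lra | nra]).
      lra. }
    assert (t * W <= 1 * W) by (apply Rmult_le_compat_r; unfold W; lra).
    unfold X, Y, W in *; lra. }
  pose proof (Hid y1 w1); pose proof (Hid y2 w2).
  assert (HYW : (1 - t) * ((1 - r * r) * Y) <= (1 - t) * (Y - W))
    by (apply Rmult_le_compat_l; lra).
  assert (Hq : 0 <= (1 - t) * (1 - r * r)) by (apply Rmult_le_pos; nra).
  assert ((1 - t) * (1 - r * r) * X <= (1 - t) * (1 - r * r) * (4 * Y))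
    by (apply Rmult_le_compat_l; lra).
  unfold X, Y, W in *; lra.
Qed.

Lemma inBall_fmap_matrix (om eta al : Cplx) (A : M2) : inT om -> inT eta -> inD al -> inBall A ->
  inBall (fmap_matrix om eta al A).
Proof.
  intros Hom Heta Hal HA.
  assert (HD : fmap_den al (piM A) <> C0) by (apply fmap_den_neq0; [|exists A]; auto).
  destruct HA as [r [Hr HA]].
  pose proof (Cnorm2_ge0 al); pose proof Hal as Hal'; unfold inD in Hal'.
  set (q := (1 - Cnorm2 al) * (1 - r * r)).
  assert (Hq : 0 < q <= 1) by (unfold q; split; [apply Rmult_lt_0_compat|]; nra).
  exists (sqrt (1 - q / 4)); split.
  { split; [apply sqrt_pos|].
    rewrite <- sqrt_1 at 2; apply sqrt_lt_1; lra. }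
  intros x1 x2; rewrite sqrt_sqrt by lra.
  pose proof (inT_neq0 om Hom).
  destruct A as [a11 a12 a21 a22]; unfold fmap_matrix in *; cbn [m11 m12 m21 m22] in *.
  set (ab := Cconj al) in *; set (D := fmap_den al (piM _)) in *.
  assert (ED : D = (C1 - ab * (a11 + a22) + ab * ab * (a11 * a22 - a12 * a21))%Cx)
    by reflexivity.
  clearbody D.
  (* [y = (I - ab A)^-1 (x1, conj(om) x2)] and [w = A y] *)
  set (x2' := (Cconj om * x2)%Cx).
  set (y1 := (((C1 - ab * a22) * x1 + ab * a12 * x2') / D)%Cx).
  set (y2 := ((ab * a21 * x1 + (C1 - ab * a11) * x2') / D)%Cx).
  set (w1 := (a11 * y1 + a12 * y2)%Cx); set (w2 := (a21 * y1 + a22 * y2)%Cx).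
  assert (Hx1 : x1 = (y1 - ab * w1)%Cx).
  { unfold w1, y1, y2; field_simplify_eq; [rewrite ED; ring | auto]. }
  assert (Hx2 : x2' = (y2 - ab * w2)%Cx).
  { unfold w2, y1, y2, x2'; field_simplify_eq; [rewrite ED; ring | auto]. }
  assert (HM1 : ((eta * ((a11 - al) * (C1 - ab * a22) + a12 * (ab * a21)) / D) * x1
      + (Cconj om * (eta * ((a11 - al) * (ab * a12) + a12 * (C1 - ab * a11)) / D)) * x2
      = eta * (w1 - al * y1))%Cx).
  { unfold w1, y1, y2, x2'; field; auto. }
  assert (HM2 : ((om * (eta * (a21 * (C1 - ab * a22) + (a22 - al) * (ab * a21)) / D)) * x1
      + (eta * (a21 * (ab * a12) + (a22 - al) * (C1 - ab * a11)) / D) * x2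
      = om * eta * (w2 - al * y2))%Cx).
  { unfold w2, y1, y2, x2'; rewrite (inT_conj_inv om Hom); field; auto. }
  assert (Hx2n : Cnorm2 x2 = Cnorm2 x2')
    by (unfold x2'; rewrite Cnorm2_mul, Cnorm2_conj, Hom; ring).
  rewrite HM1, HM2, !Cnorm2_mul, Hom, Heta, Hx2n, Hx1, Hx2, !Rmult_1_l.
  apply mob_pair_contraction; [assumption | assumption | apply HA].
Qed.

Lemma fmap_preserves_P (om eta al : Cplx) (z : C3) : inT om -> inT eta -> inD al -> inP z ->
  inP (fmap om eta al z).
Proof.
  intros Hom Heta Hal [A [HA <-]].
  exists (fmap_matrix om eta al A); split.
  - apply inBall_fmap_matrix; assumption.
  - apply piM_fmap_matrix; [|apply fmap_den_neq0; [|exists A]]; auto.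
Qed.

(** * Linear fractional maps acting on [(a, s, p)] *)

(* Side conditions of [field] come back with [C1] unfolded to a record. *)
Ltac Cneq_from H :=
  let E := fresh in
  intro E; apply H; rewrite <- E; try change {| Re := R1; Im := R0 |} with C1; ring.

Section LinearFractional.
Local Open Scope Cplx_scope.

(* The action of [lam |-> (a lam + b) / (c lam + d)] on symmetric functions:
   for [(s, p) = (l1 + l2, l1 l2)], [lft_den c d (x, s, p) = (c l1 + d) (c l2 + d)]. *)
Definition lft_den (c d : Cplx) (z : C3) : Cplx :=
  let '(_, s, p) := z in c * c * p + c * d * s + d * d.

Definition lft_map (w a b c d : Cplx) (z : C3) : C3 :=
  let '(x, s, p) := z in
  (w * (a * d - b * c) * x / lft_den c d z,
   ((C1 + C1) * a * c * p + (a * d + b * c) * s + (C1 + C1) * b * d) / lft_den c d z,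
   (a * a * p + a * b * s + b * b) / lft_den c d z).

Lemma lft_den_fmap_den (al : Cplx) (z : C3) : lft_den (- Cconj al) C1 z = fmap_den al z.
Proof. destruct z as [[x s] p]; unfold lft_den, fmap_den; ring. Qed.

Lemma fmap_lft_map (om eta al : Cplx) (z : C3) : fmap_den al z <> C0 ->
  fmap om eta al z = lft_map om eta (- (eta * al)) (- Cconj al) C1 z.
Proof.
  intros H; rewrite <- lft_den_fmap_den in H.
  destruct z as [[x s] p]; unfold fmap, lft_map, lft_den in *.
  rewrite RtoC_Cnorm2, RtoC_2.
  f_equal; [f_equal|]; field; Cneq_from H.
Qed.

Lemma lft_den_scale (k c d : Cplx) (z : C3) : lft_den (k * c) (k * d) z = k * k * lft_den c d z.
Proof. destruct z as [[x s] p]; unfold lft_den; ring. Qed.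

Lemma lft_map_scale (w a b c d k : Cplx) (z : C3) : k <> C0 -> lft_den c d z <> C0 ->
  lft_map w (k * a) (k * b) (k * c) (k * d) z = lft_map w a b c d z.
Proof.
  intros Hk H; pose proof (lft_den_scale k c d z) as E.
  destruct z as [[x s] p]; unfold lft_map; rewrite E; unfold lft_den in *.
  f_equal; [f_equal|]; field; auto.
Qed.

Lemma lft_den_lft_map (w a b c d c' d' : Cplx) (z : C3) : lft_den c d z <> C0 ->
  lft_den c' d' (lft_map w a b c d z)
  = lft_den (c' * a + d' * c) (c' * b + d' * d) z / lft_den c d z.
Proof. destruct z as [[x s] p]; unfold lft_map, lft_den; intros H; field; auto. Qed.

Lemma lft_map_comp (w1 a1 b1 c1 d1 w2 a2 b2 c2 d2 : Cplx) (z : C3) :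
  lft_den c2 d2 z <> C0 -> lft_den (c1 * a2 + d1 * c2) (c1 * b2 + d1 * d2) z <> C0 ->
  lft_map w1 a1 b1 c1 d1 (lft_map w2 a2 b2 c2 d2 z) =
  lft_map (w1 * w2) (a1 * a2 + b1 * c2) (a1 * b2 + b1 * d2)
    (c1 * a2 + d1 * c2) (c1 * b2 + d1 * d2) z.
Proof.
  intros H2 H12; pose proof (lft_den_lft_map w2 a2 b2 c2 d2 c1 d1 z H2) as E.
  destruct z as [[x s] p]; cbn [lft_map] in E |- *; rewrite E.
  unfold lft_den in *; f_equal; [f_equal|]; field; auto.
Qed.

End LinearFractional.

(** * Moebius maps of the disc *)

Section Mobius.
Local Open Scope Cplx_scope.

Lemma mob_den_neq0 (al lam : Cplx) : inD al -> inD lam -> C1 - Cconj al * lam <> C0.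
Proof. intros; apply C1_sub_neq0, inD_mul; [apply inD_conj|]; assumption. Qed.

Lemma inD_half : inD (Cinv (C1 + C1)).
Proof. unfold inD; Cunfold; simpl; field_simplify; lra. Qed.

Lemma mob_inj (eta al eta' al' : Cplx) : inT eta' -> inD al -> inD al' ->
  (forall lam, inD lam -> mob eta al lam = mob eta' al' lam) -> eta = eta' /\ al = al'.
Proof.
  intros He' Hal Hal' Hmob.
  pose proof (inT_neq0 _ He') as He'0.
  (* both maps vanish at [al] *)
  assert (Hal_eq : al = al').
  { pose proof (Hmob al Hal) as E; unfold mob in E.
    pose proof (mob_den_neq0 al al Hal Hal); pose proof (mob_den_neq0 al' al Hal' Hal).
    transitivity (al' + (eta' * (al - al') / (C1 - Cconj al' * al)) * (C1 - Cconj al' * al) / eta');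
      [field; auto|].
    rewrite <- E; field; auto. }
  subst al'; split; [|reflexivity].
  assert (Hpt : forall lam, inD lam -> lam - al <> C0 -> eta = eta').
  { intros lam Hl Hne; pose proof (Hmob lam Hl) as E; unfold mob in E.
    pose proof (mob_den_neq0 al lam Hal Hl).
    transitivity (eta * (lam - al) / (C1 - Cconj al * lam) * (C1 - Cconj al * lam) / (lam - al));
      [field; auto|].
    rewrite E; field; auto. }
  destruct (Req_dec (Cnorm2 al) 0) as [H0 | H0].
  - apply Cnorm2_eq0 in H0; subst al.
    apply (Hpt _ inD_half); apply Cnorm2_gt0_neq0; Cunfold; simpl; field_simplify; lra.
  - apply (Hpt _ inD_C0); apply Cnorm2_gt0_neq0.
    replace (C0 - al) with (- al) by ring; rewrite Cnorm2_opp.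
    pose proof (Cnorm2_ge0 al); lra.
Qed.

Definition mob_comp_eta (eta1 al1 eta2 al2 : Cplx) : Cplx :=
  eta1 * (eta2 + al1 * Cconj al2) / (C1 + Cconj al1 * eta2 * al2).

Definition mob_comp_alpha (eta1 al1 eta2 al2 : Cplx) : Cplx :=
  (al2 + al1 * Cconj eta2) / (C1 + al1 * Cconj eta2 * Cconj al2).

Lemma mob_comp_den_lt (eta2 al1 al2 : Cplx) : inT eta2 -> inD al1 -> inD al2 ->
  (Cnorm2 (al2 + al1 * Cconj eta2)%Cx < Cnorm2 (C1 + al1 * Cconj eta2 * Cconj al2)%Cx)%R.
Proof.
  unfold inT, inD; intros He Ha1 Ha2.
  assert (E : (Cnorm2 (C1 + al1 * Cconj eta2 * Cconj al2)%Cx - Cnorm2 (al2 + al1 * Cconj eta2)%Cx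
               = (1 - Cnorm2 al1 * Cnorm2 eta2) * (1 - Cnorm2 al2))%R)
    by (destruct eta2, al1, al2; Cunfold; simpl; ring).
  rewrite He, Rmult_1_r in E.
  assert (0 < (1 - Cnorm2 al1) * (1 - Cnorm2 al2))%R by (apply Rmult_lt_0_compat; lra).
  lra.
Qed.

Lemma mob_comp_den_neq0 (eta2 al1 al2 : Cplx) : inT eta2 -> inD al1 -> inD al2 ->
  C1 + Cconj al1 * eta2 * al2 <> C0 /\ C1 + al1 * Cconj eta2 * Cconj al2 <> C0.
Proof.
  intros He Ha1 Ha2; pose proof (mob_comp_den_lt eta2 al1 al2 He Ha1 Ha2) as H.
  pose proof (Cnorm2_ge0 (al2 + al1 * Cconj eta2)).
  replace (C1 + Cconj al1 * eta2 * al2) with (Cconj (C1 + al1 * Cconj eta2 * Cconj al2))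
    by (destruct eta2, al1, al2; apply Cplx_ext; Cunfold; simpl; ring).
  split; apply Cnorm2_gt0_neq0; rewrite ?Cnorm2_conj; lra.
Qed.

Lemma mob_comp_num_neq0 (eta2 al1 al2 : Cplx) : inT eta2 -> inD al1 -> inD al2 ->
  eta2 + al1 * Cconj al2 <> C0.
Proof.
  intros He2 Ha1 Ha2; apply Cadd_neq0; unfold inT in He2; rewrite He2.
  apply inD_mul; [|apply inD_conj]; assumption.
Qed.

Lemma inT_mob_comp_eta (eta1 al1 eta2 al2 : Cplx) : inT eta1 -> inT eta2 -> inD al1 -> inD al2 ->
  inT (mob_comp_eta eta1 al1 eta2 al2).
Proof.
  intros He1 He2 Ha1 Ha2; destruct (mob_comp_den_neq0 eta2 al1 al2) as [HK _]; auto.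
  unfold inT, mob_comp_eta; rewrite Cnorm2_div, Cnorm2_mul, He1 by exact HK.
  assert (E : (Cnorm2 (eta2 + al1 * Cconj al2)%Cx - Cnorm2 (C1 + Cconj al1 * eta2 * al2)%Cx
               = (Cnorm2 eta2 - 1) * (1 - Cnorm2 al1 * Cnorm2 al2))%R)
    by (destruct eta2, al1, al2; Cunfold; simpl; ring).
  unfold inT in He2; rewrite He2 in E.
  apply Cnorm2_gt0 in HK.
  replace (Cnorm2 (eta2 + al1 * Cconj al2)) with (Cnorm2 (C1 + Cconj al1 * eta2 * al2)) by lra.
  field; lra.
Qed.

Lemma inD_mob_comp_alpha (eta1 al1 eta2 al2 : Cplx) : inT eta2 -> inD al1 -> inD al2 ->
  inD (mob_comp_alpha eta1 al1 eta2 al2).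
Proof.
  intros He2 Ha1 Ha2; pose proof (mob_comp_den_lt eta2 al1 al2 He2 Ha1 Ha2) as H.
  destruct (mob_comp_den_neq0 eta2 al1 al2) as [_ HK]; auto.
  unfold inD, mob_comp_alpha; rewrite Cnorm2_div by exact HK.
  apply Cnorm2_gt0 in HK.
  apply (Rmult_lt_reg_r (Cnorm2 (C1 + al1 * Cconj eta2 * Cconj al2))); [exact HK|].
  field_simplify; lra.
Qed.

Lemma mob_maps_D (eta al lam : Cplx) : inT eta -> inD al -> inD lam -> inD (mob eta al lam).
Proof.
  intros He Ha Hl; pose proof (mob_den_neq0 al lam Ha Hl) as Hd.
  unfold inD, mob; rewrite Cnorm2_div, Cnorm2_mul, He, Rmult_1_l by exact Hd.
  assert (E : (Cnorm2 (C1 - Cconj al * lam)%Cx - Cnorm2 (lam - al)%Cx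
               = (1 - Cnorm2 al) * (1 - Cnorm2 lam))%R)
    by (destruct al, lam; Cunfold; simpl; ring).
  unfold inD in Ha, Hl; apply Cnorm2_gt0 in Hd.
  assert (0 < (1 - Cnorm2 al) * (1 - Cnorm2 lam))%R by (apply Rmult_lt_0_compat; lra).
  apply (Rmult_lt_reg_r (Cnorm2 (C1 - Cconj al * lam))); [exact Hd|].
  field_simplify; lra.
Qed.

Lemma mob_comp (eta1 al1 eta2 al2 lam : Cplx) : inT eta2 -> inD al1 -> inD al2 -> inD lam ->
  mob (mob_comp_eta eta1 al1 eta2 al2) (mob_comp_alpha eta1 al1 eta2 al2) lam
  = mob eta1 al1 (mob eta2 al2 lam).
Proof.
  intros He2 Ha1 Ha2 Hl.
  destruct (mob_comp_den_neq0 eta2 al1 al2) as [HK _]; auto.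
  pose proof (mob_den_neq0 al2 lam Ha2 Hl) as H2.
  pose proof (mob_den_neq0 al1 (mob eta2 al2 lam) Ha1 (mob_maps_D eta2 al2 lam He2 Ha2 Hl)) as H12.
  pose proof (mob_comp_num_neq0 eta2 al1 al2 He2 Ha1 Ha2).
  pose proof (inT_neq0 _ He2).
  unfold mob, mob_comp_eta, mob_comp_alpha in *.
  rewrite Cconj_div, !Cconj_add, !Cconj_mul, !Cconj_involutive, Cconj_C1.
  rewrite (inT_conj_inv eta2 He2).
  field; repeat split; try change {| Re := R1; Im := R0 |} with C1; auto.
  intro E; apply H12.
  transitivity ((C1 - Cconj al2 * lam - Cconj al1 * (eta2 * (lam - al2))) / (C1 - Cconj al2 * lam));
    [field; auto | rewrite E; field; auto].
Qed.

Lemma mob_id (lam : Cplx) : mob C1 C0 lam = lam.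
Proof. unfold mob; rewrite Cconj_C0; field; Cneq_from C1_neq0. Qed.

Lemma mob_inv (eta al lam : Cplx) : inT eta -> inD al -> inD lam ->
  mob (Cconj eta) (- (eta * al)) (mob eta al lam) = lam /\
  mob eta al (mob (Cconj eta) (- (eta * al)) lam) = lam.
Proof.
  intros He Ha Hl; pose proof (inT_neq0 _ He).
  pose proof (mob_den_neq0 al lam Ha Hl).
  pose proof (mob_den_neq0 al al Ha Ha).
  pose proof (mob_den_neq0 _ lam (inD_opp _ (inD_mul_inT eta al He Ha)) Hl).
  unfold mob in *; rewrite Cconj_opp, Cconj_mul, (inT_conj_inv eta He) in *.
  split; field; repeat split; try change {| Re := R1; Im := R0 |} with C1; auto.
  - Cneq_from H1.
  - replace (eta - - Cconj al * lam) with (eta * (C1 - - (Cinv eta * Cconj al) * lam))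
      by (field; auto).
    apply Cmul_neq0; auto.
  - replace (eta - - Cconj al * lam - Cconj al * (lam - - (eta * al)))
      with (eta * (C1 - Cconj al * al)) by ring.
    apply Cmul_neq0; auto.
Qed.

End Mobius.

(** * Composition and inverse laws *)

Section FmapGroup.
Local Open Scope Cplx_scope.

Lemma fmap_id (z : C3) : fmap C1 C1 C0 z = z.
Proof.
  destruct z as [[x s] p]; unfold fmap.
  rewrite Cconj_C0, RtoC_2.
  replace (RtoC (Cnorm2 C0)) with C0 by (apply Cplx_ext; Cunfold; simpl; ring).
  f_equal; [f_equal|]; field; Cneq_from C1_neq0.
Qed.

Lemma fmap_comp (om1 eta1 al1 om2 eta2 al2 : Cplx) (z : C3) :
  inT om2 -> inT eta2 -> inD al1 -> inD al2 -> inP z ->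
  fmap om1 eta1 al1 (fmap om2 eta2 al2 z)
  = fmap (om1 * om2) (mob_comp_eta eta1 al1 eta2 al2) (mob_comp_alpha eta1 al1 eta2 al2) z.
Proof.
  intros Hom2 He2 Ha1 Ha2 Hz.
  pose proof (inD_mob_comp_alpha eta1 al1 eta2 al2 He2 Ha1 Ha2) as Ha3.
  pose proof (inT_neq0 _ He2).
  pose proof (mob_comp_num_neq0 eta2 al1 al2 He2 Ha1 Ha2).
  destruct (mob_comp_den_neq0 eta2 al1 al2) as [HK _]; auto.
  pose proof (fmap_den_neq0 al2 z Ha2 Hz) as Hd2.
  pose proof (fmap_den_neq0 _ z Ha3 Hz) as Hd3.
  rewrite (fmap_lft_map om1 eta1 al1)
    by (apply fmap_den_neq0; [|apply fmap_preserves_P]; assumption).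
  rewrite (fmap_lft_map om2 eta2 al2), (fmap_lft_map (om1 * om2) _ _ z) by assumption.
  set (K := C1 + Cconj al1 * eta2 * al2) in *.
  set (eta3 := mob_comp_eta eta1 al1 eta2 al2); set (al3 := mob_comp_alpha eta1 al1 eta2 al2).
  (* the composite coefficient quadruple is [K] times that of [(eta3, al3)] *)
  assert (EA : eta1 * eta2 + - (eta1 * al1) * - Cconj al2 = K * eta3).
  { unfold eta3, mob_comp_eta, K; field; exact HK. }
  assert (EB : eta1 * - (eta2 * al2) + - (eta1 * al1) * C1 = K * - (eta3 * al3)).
  { unfold eta3, al3, mob_comp_eta, mob_comp_alpha, K.
    rewrite (inT_conj_inv eta2 He2).
    field; repeat split; try change {| Re := R1; Im := R0 |} with C1; auto. }
  assert (EC : - Cconj al1 * eta2 + C1 * - Cconj al2 = K * - Cconj al3).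
  { unfold al3, mob_comp_alpha, K.
    rewrite Cconj_div, !Cconj_add, !Cconj_mul, Cconj_C1, !Cconj_involutive.
    field; exact HK. }
  assert (ED : - Cconj al1 * - (eta2 * al2) + C1 * C1 = K * C1) by (unfold K; ring).
  rewrite lft_map_comp; rewrite ?EA, ?EB, ?EC, ?ED, ?lft_den_fmap_den.
  - apply lft_map_scale; [exact HK | rewrite lft_den_fmap_den; exact Hd3].
  - exact Hd2.
  - rewrite lft_den_scale, lft_den_fmap_den; repeat apply Cmul_neq0; assumption.
Qed.

Lemma fmap_comp_law (om1 eta1 al1 om2 eta2 al2 eta3 al3 : Cplx) :
  inT om2 -> inT eta2 -> inD al1 -> inD al2 -> inT eta3 -> inD al3 ->
  (forall lam, inD lam -> mob eta3 al3 lam = mob eta1 al1 (mob eta2 al2 lam)) ->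
  forall z, inP z -> fmap om1 eta1 al1 (fmap om2 eta2 al2 z) = fmap (om1 * om2) eta3 al3 z.
Proof.
  intros Hom2 He2 Ha1 Ha2 He3 Ha3 Hmob z Hz.
  destruct (mob_inj (mob_comp_eta eta1 al1 eta2 al2) (mob_comp_alpha eta1 al1 eta2 al2) eta3 al3)
    as [<- <-]; auto.
  - apply inD_mob_comp_alpha; assumption.
  - intros lam Hl; rewrite mob_comp, Hmob; auto.
  - apply fmap_comp; assumption.
Qed.

Lemma fmap_inv_law (om eta al eta' al' : Cplx) :
  inT om -> inT eta -> inD al -> inT eta' -> inD al' ->
  (forall lam, inD lam -> mob eta' al' (mob eta al lam) = lam) ->
  forall z, inP z -> fmap (Cconj om) eta' al' (fmap om eta al z) = z.
Proof.
  intros Hom He Ha He' Ha' Hmob z Hz.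
  rewrite (fmap_comp_law (Cconj om) eta' al' om eta al C1 C0); auto.
  - rewrite inT_conj_mul by assumption; apply fmap_id.
  - exact inT_C1.
  - exact inD_C0.
  - intros lam Hl; rewrite mob_id; symmetry; auto.
Qed.

End FmapGroup.

(** * Holomorphy *)

Definition clin (c1 c2 c3 : Cplx) (h : C3) : Cplx :=
  let '(x, s, p) := h in (c1 * x + c2 * s + c3 * p)%Cx.

Definition has_Cderiv (f : C3 -> Cplx) (z : C3) (c1 c2 c3 : Cplx) : Prop :=
  forall e, 0 < e -> exists d, 0 < d /\ forall h, C3norm2 h < d ->
    Cnorm2 (f (C3add z h) - f z - clin c1 c2 c3 h)%Cx <= e * C3norm2 h.

Lemma C3norm2_ge0 (h : C3) : 0 <= C3norm2 h.
Proof.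
  destruct h as [[x s] p]; simpl.
  pose proof (Cnorm2_ge0 x); pose proof (Cnorm2_ge0 s); pose proof (Cnorm2_ge0 p); lra.
Qed.

Lemma clin_add (c1 c2 c3 : Cplx) (z h : C3) :
  clin c1 c2 c3 (C3add z h) = (clin c1 c2 c3 z + clin c1 c2 c3 h)%Cx.
Proof. destruct z as [[x s] p], h as [[a b] c]; simpl; ring. Qed.

Lemma Cnorm2_clin_le (c1 c2 c3 : Cplx) (h : C3) :
  Cnorm2 (clin c1 c2 c3 h) <= 3 * (Cnorm2 c1 + Cnorm2 c2 + Cnorm2 c3) * C3norm2 h.
Proof.
  destruct h as [[x s] p]; simpl.
  eapply Rle_trans; [apply Cnorm2_add3_le|]; rewrite !Cnorm2_mul.
  pose proof (Cnorm2_ge0 x); pose proof (Cnorm2_ge0 s); pose proof (Cnorm2_ge0 p).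
  pose proof (Cnorm2_ge0 c1); pose proof (Cnorm2_ge0 c2); pose proof (Cnorm2_ge0 c3).
  assert (Cnorm2 c1 * Cnorm2 x <= Cnorm2 c1 * (Cnorm2 x + Cnorm2 s + Cnorm2 p))
    by (apply Rmult_le_compat_l; lra).
  assert (Cnorm2 c2 * Cnorm2 s <= Cnorm2 c2 * (Cnorm2 x + Cnorm2 s + Cnorm2 p))
    by (apply Rmult_le_compat_l; lra).
  assert (Cnorm2 c3 * Cnorm2 p <= Cnorm2 c3 * (Cnorm2 x + Cnorm2 s + Cnorm2 p))
    by (apply Rmult_le_compat_l; lra).
  nra.
Qed.

Lemma Cdifferentiable_components (f1 f2 f3 : C3 -> Cplx) (z : C3)
  (a1 a2 a3 b1 b2 b3 c1 c2 c3 : Cplx) :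
  has_Cderiv f1 z a1 a2 a3 -> has_Cderiv f2 z b1 b2 b3 -> has_Cderiv f3 z c1 c2 c3 ->
  Cdifferentiable (fun w => (f1 w, f2 w, f3 w)) z.
Proof.
  intros D1 D2 D3.
  exists (fun h => (clin a1 a2 a3 h, clin b1 b2 b3 h, clin c1 c2 c3 h)); split.
  { split.
    - intros [[x s] p] [[x' s'] p']; simpl; f_equal; [f_equal|]; ring.
    - intros c [[x s] p]; simpl; f_equal; [f_equal|]; ring. }
  intros eps Heps.
  assert (He : 0 < eps * eps / 3) by (apply Rdiv_lt_0_compat; [apply Rmult_lt_0_compat|]; lra).
  destruct (D1 _ He) as [d1 [Hd1 P1]], (D2 _ He) as [d2 [Hd2 P2]], (D3 _ He) as [d3 [Hd3 P3]].
  set (m := Rmin d1 (Rmin d2 d3)).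
  assert (Hm : 0 < m) by (unfold m; repeat apply Rmin_pos; auto).
  exists (sqrt m); split; [apply sqrt_lt_R0; exact Hm|].
  intros h [_ Hh]; rewrite sqrt_sqrt in Hh by lra.
  pose proof (Rmin_l d1 (Rmin d2 d3)); pose proof (Rmin_r d1 (Rmin d2 d3)).
  pose proof (Rmin_l d2 d3); pose proof (Rmin_r d2 d3).
  specialize (P1 h ltac:(unfold m in *; lra)); specialize (P2 h ltac:(unfold m in *; lra));
    specialize (P3 h ltac:(unfold m in *; lra)).
  simpl; lra.
Qed.

Lemma Cdifferentiable_ext (F G : C3 -> C3) (z : C3) :
  (forall w, F w = G w) -> Cdifferentiable G z -> Cdifferentiable F z.
Proof.
  intros E [L [HL HD]]; exists L; split; [exact HL|].
  intros eps He; destruct (HD eps He) as [d [Hd P]]; exists d; split; [exact Hd|].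
  intros h Hh; rewrite !E; auto.
Qed.

Definition affine_ratio (n1 n2 n3 n0 q1 q2 q3 q0 : Cplx) (z : C3) : Cplx :=
  ((clin n1 n2 n3 z + n0) / (clin q1 q2 q3 z + q0))%Cx.

Lemma quotient_remainder_bound (X Y Z d H a b : R) : 0 < d -> 0 <= H ->
  0 <= X <= a * H -> 0 <= Y <= b * H -> d <= 2 * Z + 2 * Y -> b * H <= d / 4 ->
  X * Y / (d * d * Z) <= 4 * a * b / (d * d * d) * H * H.
Proof.
  intros Hd HH HX HY HZ HbH.
  assert (HZ4 : d / 4 <= Z) by lra.
  assert (Hdd : 0 < d * d) by nra.
  assert (HXY : X * Y <= (a * H) * (b * H)) by (apply Rmult_le_compat; lra).
  assert (Hden : d * d * (d / 4) <= d * d * Z) by (apply Rmult_le_compat_l; lra).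
  apply Rle_trans with ((a * H) * (b * H) / (d * d * (d / 4))).
  - unfold Rdiv; apply Rmult_le_compat; try lra.
    + apply Rmult_le_pos; lra.
    + left; apply Rinv_0_lt_compat, Rmult_lt_0_compat; lra.
    + apply Rinv_le_contravar; [apply Rmult_lt_0_compat|]; lra.
  - right; field; lra.
Qed.

Section AffineRatio.
Variables n1 n2 n3 n0 q1 q2 q3 q0 : Cplx.
Local Open Scope Cplx_scope.

Lemma clin_lincomb (a b c : Cplx) (h : C3) :
  clin ((a * n1 - b * q1) / c) ((a * n2 - b * q2) / c) ((a * n3 - b * q3) / c) h
  = (a * clin n1 n2 n3 h - b * clin q1 q2 q3 h) / c.
Proof. destruct h as [[x s] p]; unfold Cdiv; simpl; ring. Qed.

Lemma affine_ratio_remainder (z h : C3) :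
  let N := clin n1 n2 n3 z + n0 in let D := clin q1 q2 q3 z + q0 in
  let L := clin n1 n2 n3 h in let Q := clin q1 q2 q3 h in
  D <> C0 -> D + Q <> C0 ->
  affine_ratio n1 n2 n3 n0 q1 q2 q3 q0 (C3add z h) - affine_ratio n1 n2 n3 n0 q1 q2 q3 q0 z
  - clin ((D * n1 - N * q1) / (D * D)) ((D * n2 - N * q2) / (D * D)) ((D * n3 - N * q3) / (D * D)) h
  = - ((D * L - N * Q) * Q) / (D * D * (D + Q)).
Proof.
  intros N D L Q HD HDQ; unfold affine_ratio; rewrite !clin_add, clin_lincomb.
  change (clin n1 n2 n3 h) with L; change (clin q1 q2 q3 h) with Q.
  replace (clin n1 n2 n3 z + L + n0) with (N + L) by (unfold N; ring).
  replace (clin q1 q2 q3 z + Q + q0) with (D + Q) by (unfold D; ring).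
  change (clin n1 n2 n3 z + n0) with N; change (clin q1 q2 q3 z + q0) with D.
  clearbody N D L Q; field; auto.
Qed.

Lemma affine_ratio_has_Cderiv (z : C3) :
  let N := clin n1 n2 n3 z + n0 in let D := clin q1 q2 q3 z + q0 in
  D <> C0 ->
  has_Cderiv (affine_ratio n1 n2 n3 n0 q1 q2 q3 q0) z
    ((D * n1 - N * q1) / (D * D)) ((D * n2 - N * q2) / (D * D)) ((D * n3 - N * q3) / (D * D)).
Proof.
  intros N D HD e He.
  set (d := Cnorm2 D); assert (Hd : (0 < d)%R) by (apply Cnorm2_gt0; exact HD).
  set (b := (3 * (Cnorm2 q1 + Cnorm2 q2 + Cnorm2 q3))%R).
  set (a := (2 * (d * (3 * (Cnorm2 n1 + Cnorm2 n2 + Cnorm2 n3))) + 2 * (Cnorm2 N * b))%R).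
  assert (Hb : (0 <= b)%R).
  { unfold b; pose proof (Cnorm2_ge0 q1); pose proof (Cnorm2_ge0 q2);
    pose proof (Cnorm2_ge0 q3); lra. }
  assert (Ha : (0 <= a)%R).
  { unfold a; pose proof (Cnorm2_ge0 n1); pose proof (Cnorm2_ge0 n2);
    pose proof (Cnorm2_ge0 n3); pose proof (Cnorm2_ge0 N).
    assert (0 <= Cnorm2 N * b)%R by (apply Rmult_le_pos; lra).
    assert (0 <= d * (3 * (Cnorm2 n1 + Cnorm2 n2 + Cnorm2 n3)))%R by (apply Rmult_le_pos; lra).
    lra. }
  set (k := (4 * a * b / (d * d * d))%R).
  assert (Hk : (0 <= k)%R).
  { unfold k, Rdiv; apply Rmult_le_pos; [nra|].
    left; apply Rinv_0_lt_compat; repeat apply Rmult_lt_0_compat; lra. }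
  exists (Rmin (d / (4 * b + 1)) (e / (k + 1))); split.
  { apply Rmin_pos; apply Rdiv_lt_0_compat; lra. }
  intros h Hh.
  pose proof (Rmin_l (d / (4 * b + 1)) (e / (k + 1))) as Hm1.
  pose proof (Rmin_r (d / (4 * b + 1)) (e / (k + 1))) as Hm2.
  pose proof (C3norm2_ge0 h) as Hh0; set (hn := C3norm2 h) in *.
  set (L := clin n1 n2 n3 h); set (Q := clin q1 q2 q3 h).
  assert (HQ : (Cnorm2 Q <= b * hn)%R) by apply Cnorm2_clin_le.
  assert (HL : (Cnorm2 L <= 3 * (Cnorm2 n1 + Cnorm2 n2 + Cnorm2 n3) * hn)%R)
    by apply Cnorm2_clin_le.
  assert (Hhd : (hn < d / (4 * b + 1))%R) by lra.
  assert (Hhe : (hn < e / (k + 1))%R) by lra.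
  assert (HbH : (b * hn <= d / 4)%R).
  { assert (HHd : (hn * (4 * b + 1) < d)%R).
    { apply (Rmult_lt_compat_r (4 * b + 1)) in Hhd; [|lra].
      unfold Rdiv in Hhd; rewrite Rmult_assoc, Rinv_l, Rmult_1_r in Hhd; lra. }
    nra. }
  assert (HZ : (d <= 2 * Cnorm2 (D + Q)%Cx + 2 * Cnorm2 Q)%R).
  { unfold d; replace D with ((D + Q) - Q) at 1 by ring; apply Cnorm2_sub_le. }
  assert (HDQ : D + Q <> C0).
  { apply Cnorm2_gt0_neq0; pose proof (Cnorm2_ge0 Q); lra. }
  rewrite affine_ratio_remainder by assumption; fold L Q.
  rewrite Cnorm2_div, Cnorm2_opp, !Cnorm2_mul by (repeat apply Cmul_neq0; assumption).
  fold d.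
  eapply Rle_trans; [apply (quotient_remainder_bound _ _ _ d hn a b); try assumption|].
  - split; [apply Cnorm2_ge0|].
    eapply Rle_trans; [apply Cnorm2_sub_le|]; rewrite !Cnorm2_mul; fold d.
    pose proof (Cnorm2_ge0 N).
    assert (d * Cnorm2 L <= d * (3 * (Cnorm2 n1 + Cnorm2 n2 + Cnorm2 n3) * hn))%R
      by (apply Rmult_le_compat_l; lra).
    assert (Cnorm2 N * Cnorm2 Q <= Cnorm2 N * (b * hn))%R by (apply Rmult_le_compat_l; lra).
    change (Cnorm2 (clin q1 q2 q3 z + q0)) with d; change (clin n1 n2 n3 z + n0) with N.
    unfold a; lra.
  - split; [apply Cnorm2_ge0 | exact HQ].
  - fold k.
    assert (HkH : (hn * (k + 1) < e)%R).
    { apply (Rmult_lt_compat_r (k + 1)) in Hhe; [|lra].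
      unfold Rdiv in Hhe; rewrite Rmult_assoc, Rinv_l, Rmult_1_r in Hhe; lra. }
    assert (k * hn <= e)%R by nra.
    apply Rmult_le_compat_r; assumption.
Qed.

End AffineRatio.

Lemma fmap_affine_ratios (om eta al : Cplx) (w : C3) :
  let ab := Cconj al in
  fmap om eta al w =
  (affine_ratio (eta * om * (C1 - al * ab)) C0 C0 C0 C0 (- ab) (ab * ab) C1 w,
   affine_ratio C0 (eta * (C1 + al * ab)) (- (eta * (C1 + C1) * ab)) (- (eta * (C1 + C1) * al))
     C0 (- ab) (ab * ab) C1 w,
   affine_ratio C0 (- (eta * eta * al)) (eta * eta) (eta * eta * al * al)
     C0 (- ab) (ab * ab) C1 w)%Cx.
Proof.
  destruct w as [[x s] p]; unfold fmap, affine_ratio, clin; rewrite RtoC_Cnorm2, RtoC_2.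
  replace (C1 - Cconj al * s + Cconj al * Cconj al * p)%Cx
    with (C0 * x + - Cconj al * s + Cconj al * Cconj al * p + C1)%Cx by ring.
  unfold Cdiv; f_equal; [f_equal|]; ring.
Qed.

Lemma fmap_Cdifferentiable (om eta al : Cplx) (z : C3) : fmap_den al z <> C0 ->
  Cdifferentiable (fmap om eta al) z.
Proof.
  intros Hd.
  assert (Hq : (clin C0 (- Cconj al) (Cconj al * Cconj al) z + C1)%Cx <> C0).
  { destruct z as [[x s] p]; simpl in Hd |- *; intro E; apply Hd; rewrite <- E; ring. }
  eapply Cdifferentiable_ext; [intro w; apply fmap_affine_ratios|].
  eapply Cdifferentiable_components; apply affine_ratio_has_Cderiv; exact Hq.
Qed.

(** * Extension to a neighbourhood of the closure *)

(* [|x|^2 <= (1 + l) |y|^2 + (1 + 1/l) |x - y|^2] with [l = (m - M) / (2 M)] *)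
Lemma Cnorm2_gt_near (M m : R) : 0 < M -> M < m ->
  exists e, 0 < e /\ forall x y, m <= Cnorm2 x -> Cnorm2 (x - y)%Cx < e -> M < Cnorm2 y.
Proof.
  intros HM Hm.
  set (l := (m - M) / (2 * M)).
  assert (Hl : 0 < l) by (unfold l; apply Rdiv_lt_0_compat; lra).
  assert (Hl2 : l * (2 * M) = m - M) by (unfold l; field; lra).
  exists ((m - M) * l / (2 * (1 + l))); split; [apply Rdiv_lt_0_compat; nra|].
  intros x y Hx Hxy.
  assert (Hsplit : l * Cnorm2 x <= l * (1 + l) * Cnorm2 y + (1 + l) * Cnorm2 (x - y)%Cx).
  { destruct x as [a b], y as [c d]; Cunfold; simpl.
    assert (0 <= (l * c - (a - c))^2 + (l * d - (b - d))^2)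
      by (apply Rplus_le_le_0_compat; apply pow2_ge_0).
    nra. }
  assert (Hxy' : (1 + l) * Cnorm2 (x - y)%Cx < (m - M) * l / 2).
  { apply (Rmult_lt_compat_l (1 + l)) in Hxy; [|lra].
    replace ((1 + l) * ((m - M) * l / (2 * (1 + l)))) with ((m - M) * l / 2) in Hxy
      by (field; lra).
    exact Hxy. }
  assert (l * (1 + l) * M < l * (1 + l) * Cnorm2 y) by nra.
  apply (Rmult_lt_reg_l (l * (1 + l))); nra.
Qed.

Lemma fmap_den_dist_le (al : Cplx) (z w : C3) : inD al ->
  Cnorm2 (fmap_den al z - fmap_den al w)%Cx <= 2 * C3dist2 z w.
Proof.
  intros Ha; unfold inD in Ha; pose proof (Cnorm2_ge0 al).
  destruct z as [[x s] p], w as [[x' s'] p']; unfold C3dist2; simpl.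
  replace (C1 - Cconj al * s + Cconj al * Cconj al * p
           - (C1 - Cconj al * s' + Cconj al * Cconj al * p'))%Cx
    with ((- Cconj al) * (s - s') + (Cconj al * Cconj al) * (p - p'))%Cx by ring.
  eapply Rle_trans; [apply Cnorm2_add_le|].
  rewrite !Cnorm2_mul, Cnorm2_opp, !Cnorm2_conj.
  pose proof (Cnorm2_ge0 (x - x')%Cx); pose proof (Cnorm2_ge0 (s - s')%Cx);
    pose proof (Cnorm2_ge0 (p - p')%Cx).
  assert (Cnorm2 al * Cnorm2 al <= 1) by nra.
  assert (Cnorm2 al * Cnorm2 (s - s')%Cx <= Cnorm2 (s - s')%Cx) by nra.
  assert (Cnorm2 al * Cnorm2 al * Cnorm2 (p - p')%Cx <= Cnorm2 (p - p')%Cx) by nra.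
  lra.
Qed.

(* The neighbourhood is [{z | m/4 < |fmap_den al z|^2}], where [m] bounds [|fmap_den al|^2]
   below on [P]. *)
Lemma fmap_extends_near_Pbar (om eta al : Cplx) : inD al -> extends_near_Pbar (fmap om eta al).
Proof.
  intros Ha; pose proof Ha as Ha'; unfold inD in Ha'; pose proof (Cnorm2_ge0 al).
  set (m := (1 - Cnorm2 al)^4 / 16).
  assert (Hm : 0 < m) by (unfold m; apply Rdiv_lt_0_compat; [apply pow_lt|]; lra).
  exists (fun z => m / 4 < Cnorm2 (fmap_den al z)), (fmap om eta al).
  split; [|split; [|split]].
  - intros z Hz.
    destruct (Cnorm2_gt_near (m / 4) (Cnorm2 (fmap_den al z))) as [e [He Pe]]; [lra|lra|].
    exists (sqrt (e / 2)); split; [apply sqrt_lt_R0; lra|].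
    intros w Hw; rewrite sqrt_sqrt in Hw by lra.
    apply (Pe (fmap_den al z)); [lra|].
    pose proof (fmap_den_dist_le al z w Ha); lra.
  - intros z Hz.
    destruct (Cnorm2_gt_near (m / 4) m) as [e [He Pe]]; [lra|lra|].
    destruct (Hz (sqrt (e / 2))) as [w [[A [HA <-]] Hd]]; [apply sqrt_lt_R0; lra|].
    rewrite sqrt_sqrt in Hd by lra.
    apply (Pe (fmap_den al (piM A))); [apply fmap_den_lower_bound; assumption|].
    replace (fmap_den al (piM A) - fmap_den al z)%Cx
      with (- (fmap_den al z - fmap_den al (piM A)))%Cx by ring.
    rewrite Cnorm2_opp; pose proof (fmap_den_dist_le al z (piM A) Ha); lra.
  - intros z Hz; apply fmap_Cdifferentiable, Cnorm2_gt0_neq0; lra.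
  - reflexivity.
Qed.

(** * Automorphisms of [P] *)

Lemma fmap_inverse (om eta al : Cplx) : inT om -> inT eta -> inD al ->
  forall z, inP z ->
    fmap (Cconj om) (Cconj eta) (- (eta * al))%Cx (fmap om eta al z) = z /\
    fmap om eta al (fmap (Cconj om) (Cconj eta) (- (eta * al))%Cx z) = z.
Proof.
  intros Hom He Ha z Hz.
  assert (Ha' : inD (- (eta * al))%Cx) by (apply inD_opp, inD_mul_inT; assumption).
  pose proof (inT_conj om Hom); pose proof (inT_conj eta He).
  split.
  - apply fmap_inv_law; auto; intros lam Hl; apply mob_inv; assumption.
  - rewrite <- (Cconj_involutive om) at 1.
    apply fmap_inv_law; auto; intros lam Hl; apply mob_inv; assumption.
Qed.

Lemma fmap_autP (om eta al : Cplx) : inT om -> inT eta -> inD al -> autP (fmap om eta al).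
Proof.
  intros Hom He Ha.
  assert (Ha' : inD (- (eta * al))%Cx) by (apply inD_opp, inD_mul_inT; assumption).
  pose proof (inT_conj om Hom); pose proof (inT_conj eta He).
  split; [intros; apply fmap_preserves_P; assumption|split].
  { intros z Hz; apply fmap_Cdifferentiable, fmap_den_neq0; assumption. }
  exists (fmap (Cconj om) (Cconj eta) (- (eta * al))%Cx).
  split; [intros; apply fmap_preserves_P; assumption|split].
  { intros z Hz; apply fmap_Cdifferentiable, fmap_den_neq0; assumption. }
  split; intros z Hz; apply (fmap_inverse om eta al); assumption.
Qed.

Theorem theorem7p1 :
  (forall omega eta alpha : Cplx, inT omega -> inT eta -> inD alpha ->
     autP (fmap omega eta alpha) /\ extends_near_Pbar (fmap omega eta alpha)) /\
  (forall omega1 eta1 alpha1 omega2 eta2 alpha2 eta3 alpha3 : Cplx,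
     inT omega1 -> inT eta1 -> inD alpha1 ->
     inT omega2 -> inT eta2 -> inD alpha2 ->
     inT eta3 -> inD alpha3 ->
     (forall lam, inD lam -> mob eta3 alpha3 lam = mob eta1 alpha1 (mob eta2 alpha2 lam)) ->
     forall z, inP z ->
       fmap omega1 eta1 alpha1 (fmap omega2 eta2 alpha2 z)
       = fmap (omega1 * omega2)%Cx eta3 alpha3 z) /\
  (forall omega eta alpha eta' alpha' : Cplx,
     inT omega -> inT eta -> inD alpha -> inT eta' -> inD alpha' ->
     (forall lam, inD lam ->
        mob eta' alpha' (mob eta alpha lam) = lam /\
        mob eta alpha (mob eta' alpha' lam) = lam) ->
     forall z, inP z ->
       fmap (Cconj omega) eta' alpha' (fmap omega eta alpha z) = z /\
       fmap omega eta alpha (fmap (Cconj omega) eta' alpha' z) = z) /\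
  (exists omega eta alpha : Cplx, inT omega /\ inT eta /\ inD alpha /\
     forall z, inP z -> fmap omega eta alpha z = z) /\
  (forall omega1 eta1 alpha1 omega2 eta2 alpha2 : Cplx,
     inT omega1 -> inT eta1 -> inD alpha1 ->
     inT omega2 -> inT eta2 -> inD alpha2 ->
     exists omega3 eta3 alpha3 : Cplx, inT omega3 /\ inT eta3 /\ inD alpha3 /\
       forall z, inP z ->
         fmap omega1 eta1 alpha1 (fmap omega2 eta2 alpha2 z) = fmap omega3 eta3 alpha3 z) /\
  (forall omega eta alpha : Cplx, inT omega -> inT eta -> inD alpha ->
     exists omega' eta' alpha' : Cplx, inT omega' /\ inT eta' /\ inD alpha' /\
       forall z, inP z ->
         fmap omega' eta' alpha' (fmap omega eta alpha z) = z /\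
         fmap omega eta alpha (fmap omega' eta' alpha' z) = z).
Proof.
  split; [|split; [|split; [|split; [|split]]]].
  - intros om eta al Hom He Ha.
    split; [apply fmap_autP | apply fmap_extends_near_Pbar]; assumption.
  - intros om1 e1 a1 om2 e2 a2 e3 a3 _ _ Ha1 Hom2 He2 Ha2 He3 Ha3.
    apply fmap_comp_law; assumption.
  - intros om eta al eta' al' Hom He Ha He' Ha' Hmob z Hz; split.
    + apply (fmap_inv_law om eta al); auto; apply Hmob.
    + rewrite <- (Cconj_involutive om) at 1.
      apply fmap_inv_law; auto using inT_conj; apply Hmob.
  - exists C1, C1, C0; repeat split; [exact inT_C1 | exact inT_C1 | exact inD_C0 |].
    intros z _; apply fmap_id.
  - intros om1 e1 a1 om2 e2 a2 Hom1 He1 Ha1 Hom2 He2 Ha2.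
    exists (om1 * om2)%Cx, (mob_comp_eta e1 a1 e2 a2), (mob_comp_alpha e1 a1 e2 a2).
    split; [apply inT_mul; assumption|split; [apply inT_mob_comp_eta; assumption|split]].
    + apply inD_mob_comp_alpha; assumption.
    + intros z Hz; apply fmap_comp; assumption.
  - intros om eta al Hom He Ha.
    exists (Cconj om), (Cconj eta), (- (eta * al))%Cx.
    split; [apply inT_conj; assumption|split; [apply inT_conj; assumption|split]].
    + apply inD_opp, inD_mul_inT; assumption.
    + apply fmap_inverse; assumption.
Qed.
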